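(* Let $p$ be a prime and identify $(\mathbb Z/p\mathbb Z)^\infty=\bigoplus_{n\ge1}\mathbb Z/p\mathbb Z$ with the additive group of the polynomial ring $\mathbb F_p[t]$. Let $N\in\mathbb N$ and suppose there is a set $B\subseteq\mathbb F_p^N$ with $|B|>p^{N/2+1}$ containing no pattern of the form $\{y,\;y+(x_1,x_2,\dots,x_N),\;y+(0,x_1,x_2,\dots,x_{N-1})\}$ with $y\in\mathbb F_p^N$ and $(x_1,\dots,x_N)\ne0$. Then there is a measure-preserving system $(X,\mathcal B,\mu,(T_n)_{n\in\mathbb F_p[t]})$ and a set $A\in\mathcal B$ with $\mu(A)>0$ such that $$\mu(A\cap T_nA\cap T_{tn}A)\le\Big(\frac{p^{N/2+1}}{|B|}\Big)^2\mu(A)^3<\mu(A)^3$$ for all $n\ne0$.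
   Context: $T_{tn}$ denotes the action of the polynomial $tn\in\mathbb F_p[t]$; ''nontrivial pattern'' means $(x_1,\dots,x_N)\neq 0$. *)

From HB Require Import structures.
From mathcomp Require Import all_boot all_order all_algebra.
From mathcomp Require Import all_classical all_reals all_analysis.
Set Implicit Arguments. Unset Strict Implicit. Unset Printing Implicit Defensive.
Import Order.TTheory GRing.Theory Num.Theory.
Local Open Scope classical_set_scope.
Local Open Scope ring_scope.

Definition shiftr (F : nmodType) (N : nat) (x : 'rV[F]_N) : 'rV[F]_N :=
  \row_(i < N) (if nat_of_ord i is k.+1 then x 0 (insubd i k) else 0).

Definition corner_free (p N : nat) (B : {set 'rV['F_p]_N}) : Prop :=
  forall y x : 'rV['F_p]_N, x != 0 ->
    ~ [/\ y \in B, y + x \in B & y + shiftr x \in B].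

Definition mp_action d (X : measurableType d) (R : realType)
  (mu : probability X R) (G : zmodType) (T : G -> X -> X) : Prop :=
  [/\ (forall g, measurable_fun setT (T g)),
      (forall g A, measurable A -> mu (T g @^-1` A) = mu A),
      T 0 = id
    & forall g h, T (g + h) = T g \o T h].

From HB Require Import structures.
From mathcomp Require Import all_boot all_order all_algebra.
From mathcomp Require Import all_classical all_reals all_analysis.
From mathcomp Require Import measurable_realfun zify ring.
Import Order.TTheory GRing.Theory Num.Theory.
Set Implicit Arguments. Unset Strict Implicit. Unset Printing Implicit Defensive.
Local Open Scope classical_set_scope.
Local Open Scope ring_scope.

(* The dual group of F_p[t] is realised by base-p digit sequences: a point r of
   [0, 1] with digits r_0 r_1 ... gives the character chi_r(m) = sum_k m_k r_k,
   and under the uniform measure the digits are independent and uniform.  The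
   system is the skew product [0, 1] x F_p^(1+N) with
   T_n (r, y) = (r, y + (chi_r(t^N n), ..., chi_r(n))), and A = [0, 1] x ({0} x B),
   so that mu(A) = |B| / p^(N+1).  Multiplying n by t shifts this vector, so a
   point of A /\ T_n A /\ T_tn A gives a pattern {b, b - u, b - shiftr u} in B;
   corner-freeness forces u = 0, i.e. chi_r kills n, tn, ..., t^(N+1) n.  When
   n <> 0 has degree d, these N + 2 equations determine each of the digits
   r_d, ..., r_(d+N+1) from the preceding ones, so they hold on a set of measure
   at most p^-N.  Hence mu(A /\ T_n A /\ T_tn A) <= p^-N mu(A), which is exactly
   (p^(N/2+1) / |B|)^2 mu(A)^3. *)

Lemma truncn_divn (R : archiFieldType) (x : R) (m : nat) : (0 < m)%N ->
  Num.trunc (x / m%:R) = (Num.trunc x %/ m)%N.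
Proof.
move=> m_gt0; have m_gt0' : 0 < m%:R :> R by rewrite ltr0n.
have [x_ge0|x_lt0] := leP 0 x; last first.
  rewrite !truncn_floor (lt_geF x_lt0) lt_geF ?div0n //.
  by rewrite pmulr_llt0 ?invr_gt0.
apply: truncn_def; have /andP[lo hi] := truncn_itv x_ge0.
rewrite ler_pdivlMr // ltr_pdivrMr // -!natrM.
apply/andP; split; first by apply: le_trans lo; rewrite ler_nat leq_divM.
by apply: lt_le_trans hi _; rewrite ler_nat ltn_ceil.
Qed.

Lemma powR_half_sqr (R : realType) (x : R) n : 0 <= x ->
  (x `^ (n%:R / 2 + 1)) ^+ 2 = x ^+ (n + 2).
Proof.
move=> x_ge0; have e2 : n%:R / 2 + 1 + (n%:R / 2 + 1) = (n + 2)%:R :> R.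
  by rewrite natrD; field.
by rewrite expr2 -powRD e2 ?powR_mulrn // pnatr_eq0 addn2.
Qed.

Lemma shiftrN (F : zmodType) N (x : 'rV[F]_N) : shiftr (- x) = - shiftr x.
Proof.
by apply/rowP => k; rewrite !mxE; case: (nat_of_ord k) => [|j]; rewrite ?oppr0 // mxE.
Qed.

Section DigitRecurrence.
Variables (p : nat) (p_pr : prime p).

Definition digitn (D t k : nat) : nat := ((t %/ p ^ (D - k)) %% p)%N.

Definition digit_recurrence (n : {poly 'F_p}) (m D t : nat) : bool :=
  [forall j : 'I_m, \sum_(i < size n) n`_i * (digitn D t (i + j))%:R == 0].

Lemma divn_expS t a : (t %/ p ^ a = t %/ p ^ a.+1 * p + (t %/ p ^ a) %% p)%N.
Proof. by rewrite {1}(divn_eq (t %/ p ^ a) p) expnSr divnMA. Qed.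

Variables (n : {poly 'F_p}) (n_neq0 : n != 0) (m : nat).
Local Notation d := (size n).-1.
Local Notation D := (d + m)%N.

Lemma digit_recurrence_step a t t' : (a <= m)%N ->
  digit_recurrence n m.+1 D t -> digit_recurrence n m.+1 D t' ->
  (t %/ p ^ a.+1 = t' %/ p ^ a.+1 -> t %/ p ^ a = t' %/ p ^ a)%N.
Proof.
move=> am /forallP rt /forallP rt' eq_hi.
have am' : (m - a < m.+1)%N by rewrite ltnS leq_subr.
have := rt (Ordinal am'); have := rt' (Ordinal am').
rewrite /= (polySpred n_neq0) !big_ord_recr /=.
have same_hi (i : 'I_d) : digitn D t (i + (m - a)) = digitn D t' (i + (m - a)).
  rewrite /digitn.
  have -> : (D - (i + (m - a)) = a.+1 + (d - i.+1))%N by have := ltn_ord i; lia.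
  by rewrite expnD !divnMA eq_hi.
move=> /eqP e' /eqP e; move: (etrans e (esym e')).
under eq_bigr => i _ do rewrite same_hi.
move=> /addrI /mulfI.
(* the leading coefficient of n is invertible, so equation m - a determines
   the digit at position a from the higher ones *)
have lead : n`_d != 0 by rewrite -lead_coefE lead_coef_eq0.
move=> /(_ lead) /(congr1 val); rewrite /= !val_Fp_nat // /digitn !modn_mod.
have -> : (D - (d + (m - a)) = a)%N by lia.
by move=> e_lo; rewrite divn_expS eq_hi e_lo -divn_expS.
Qed.

Lemma digit_recurrence_inj t t' :
  digit_recurrence n m.+1 D t -> digit_recurrence n m.+1 D t' ->
  (t %/ p ^ m.+1 = t' %/ p ^ m.+1 -> t = t')%N.
Proof.
move=> rt rt' eq_top.
suff eq_div a : (a <= m.+1)%N -> (t %/ p ^ (m.+1 - a) = t' %/ p ^ (m.+1 - a))%N.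
  by have := eq_div m.+1 (leqnn _); rewrite subnn !divn1.
elim: a => [|a IH] am; first by rewrite subn0.
have -> : (m.+1 - a.+1 = m - a)%N by [].
apply: digit_recurrence_step rt rt' _; first exact: leq_subr.
by rewrite -subSn ?IH // ltnW.
Qed.

Lemma card_digit_recurrence :
  (#|[set t : 'I_(p ^ D.+1).+1 | digit_recurrence n m.+1 D t]%SET| <= (p ^ d).+1)%N.
Proof.
pose top (t : 'I_(p ^ D.+1).+1) : 'I_(p ^ d).+1 := inord (t %/ p ^ m.+1).
have top_lt (t : 'I_(p ^ D.+1).+1) : (t %/ p ^ m.+1 < (p ^ d).+1)%N.
  rewrite ltnS -(@mulnK (p ^ d) (p ^ m.+1)) ?expn_gt0 ?prime_gt0 // -expnD addnS.
  by apply: leq_div2r; rewrite -ltnS.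
rewrite -(card_in_imset (f := top)).
  by rewrite -[X in (_ <= X)%N]card_ord max_card.
move=> t t'; rewrite !inE => rt rt' /(congr1 val); rewrite /= !inordK // => eq_top.
exact/val_inj/(digit_recurrence_inj rt rt' eq_top).
Qed.

End DigitRecurrence.

Section Grid.
Variable R : realType.
Local Notation nu := (uniform_prob (@ltr01 R)).

Lemma measurable_truncn_eq (t : nat) : measurable [set x : R | Num.trunc x = t].
Proof.
have le_itv k : [set x : R | (Num.trunc x <= k)%N] = `]-oo, k.+1%:R[%classic.
  by apply/seteqP; split=> x /=; rewrite in_itv /= truncn_le_nat.
case: t => [|t].
  rewrite [X in measurable X](_ : _ = [set x | (Num.trunc x <= 0)%N]).
    by rewrite le_itv; exact: measurable_itv.
  by apply/seteqP; split=> x /=; rewrite leqn0 => /eqP.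
rewrite [X in measurable X](_ : _ = [set x | (Num.trunc x <= t.+1)%N] `\`
                                    [set x | (Num.trunc x <= t)%N]).
  by rewrite !le_itv; apply: measurableD; exact: measurable_itv.
by apply/seteqP; split=> x /=; [move=> ->; split; lia | move=> [? ?]; lia].
Qed.

Lemma measurable_truncn_grid (P : R) (G : set nat) :
  measurable [set r : R | G (Num.trunc (P * r))].
Proof.
rewrite [X in measurable X](_ : _ =
    \bigcup_(t in G) ( *%R P @^-1` [set x | Num.trunc x = t])).
  apply: bigcup_measurable => t _; rewrite -[X in measurable X]setTI.
  exact: mulrl_measurable (measurable_truncn_eq t).
by apply/seteqP; split=> r /=; [exists (Num.trunc (P * r)) | move=> [t Gt /= ->]].
Qed.

Lemma uniform_probE (U : set R) : measurable U ->
  nu U = lebesgue_measure (U `&` `[0, 1]).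
Proof.
move=> mU; rewrite /uniform_prob integral_uniform_pdf.
rewrite (eq_integral (cst 1%E)); last first.
  move=> x; rewrite inE => -[_ /=]; rewrite in_itv /= /uniform_pdf => ->.
  by rewrite subr0 invr1.
by rewrite integral_cst ?mul1e //; apply: measurableI => //; exact: measurable_itv.
Qed.

(* The extra grid point [P] accounts for [r = 1]. *)
Lemma uniform_truncn_grid_le (P : nat) (g : pred nat) : (0 < P)%N ->
  (nu [set r | g (Num.trunc (P%:R * r))] <=
     (#|[set t : 'I_P.+1 | g t]%SET|%:R / P%:R)%:E)%E.
Proof.
move=> P_gt0; have P_gt0' : 0 < P%:R :> R by rewrite ltr0n.
set S := [set r | _]; have mS : measurable S := measurable_truncn_grid _ g.
pose cell (k : nat) : set R :=
  if g k then `[k%:R / P%:R, k.+1%:R / P%:R]%classic else set0.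
have mcell k : measurable (cell k) by rewrite /cell; case: (g k).
have cover : S `&` `[0, 1] `<=` \big[setU/set0]_(k < P.+1) cell k.
  move=> r [/= gr]; rewrite in_itv /= => /andP[r_ge0 r_le1].
  have Pr_ge0 : 0 <= P%:R * r by rewrite mulr_ge0 // ltW.
  have t_le : (Num.trunc (P%:R * r) < P.+1)%N.
    rewrite truncn_lt_nat // (@le_lt_trans _ _ P%:R) ?ltr_nat //.
    by rewrite ler_piMr // ltW.
  rewrite -bigcup_mkord; exists (Num.trunc (P%:R * r)) => //=.
  have /andP[lo hi] := truncn_itv Pr_ge0.
  rewrite /cell gr /= in_itv /= ler_pdivrMr // ler_pdivlMr //.
  by rewrite ![r * _]mulrC lo ltW.
have mS01 : measurable (S `&` `[0, 1]).
  by apply: measurableI => //; exact: measurable_itv.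
rewrite uniform_probE //.
apply: le_trans
  (content_subadditive lebesgue_measure (fun k _ => mcell k) mS01 cover) _.
rewrite (eq_bigr (fun k : 'I_P.+1 => ((g k)%:R / P%:R)%:E)); last first.
  move=> k _; rewrite /cell; case: (g k); last by rewrite measure0 mul0r.
  have /= -> := lebesgue_measure_itv `[k%:R / P%:R, k.+1%:R / P%:R].
  rewrite lte_fin ltr_pM2r ?invr_gt0 // ltr_nat ltnSn.
  by rewrite -EFinB -mulrBl -natr1 addrAC subrr add0r !mul1r.
rewrite sumEFin -mulr_suml lee_fin ler_pM2r ?invr_gt0 //.
rewrite -sum1_card natr_sum [leRHS]big_mkcond /=.
by apply: ler_sum => k _; rewrite inE; case: (g k).
Qed.

End Grid.

Section FiberedSpace.
Variables (d : measure_display) (T : measurableType d) (F : finZmodType).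

(* As [F] is finite, fiberwise measurability below is the product of the
   sigma-algebra of [T] with the discrete one of [F]. *)
Definition fibered : Type := (T * F)%type.
HB.instance Definition _ := Choice.copy fibered (T * F)%type.
HB.instance Definition _ := isPointed.Build fibered (point, 0).

Definition fiber (S : set fibered) (y : F) : set T := [set t | S (t, y)].

Definition fibered_measurable (S : set fibered) : Prop :=
  forall y, measurable (fiber S y).

Lemma fibered_measurable0 : fibered_measurable set0.
Proof. by move=> y; rewrite [X in measurable X](_ : _ = set0). Qed.

Lemma fibered_measurableC S : fibered_measurable S -> fibered_measurable (~` S).
Proof. by move=> mS y; exact: (measurableC (mS y)). Qed.

Lemma fibered_measurable_bigcup (S : (set fibered)^nat) :
  (forall i, fibered_measurable (S i)) -> fibered_measurable (\bigcup_i S i).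
Proof.
move=> mS y; rewrite [X in measurable X](_ : _ = \bigcup_i fiber (S i) y).
  by apply: bigcupT_measurable => i; exact: mS.
by apply/seteqP; split=> t /= [i _ Sit]; exists i.
Qed.

HB.instance Definition _ := @isMeasurable.Build default_measure_display fibered
  fibered_measurable fibered_measurable0 fibered_measurableC fibered_measurable_bigcup.

Lemma fiber_cylinder (A : {set F}) y :
  fiber [set x | x.2 \in A] y = if y \in A then setT else set0.
Proof. by apply/seteqP; split=> t; rewrite /fiber /=; case: (y \in A). Qed.

Lemma measurable_cylinder (A : {set F}) : measurable [set x : fibered | x.2 \in A].
Proof. by move=> y; rewrite fiber_cylinder; case: (y \in A). Qed.

End FiberedSpace.

Section FiberedMeasure.
Variables (d : measure_display) (T : measurableType d) (F : finZmodType).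
Variables (R : realType) (nu : probability T R).
Local Notation X := (fibered T F).

Definition fibered_measure (S : set X) : \bar R :=
  (\sum_(y : F) ((#|F|%:R^-1)%:E * nu (fiber S y)))%E.

Lemma fibered_measure0 : fibered_measure set0 = 0%E.
Proof. by rewrite /fibered_measure big1 // => y _; rewrite measure0 mule0. Qed.

Lemma fibered_measure_ge0 S : (0 <= fibered_measure S)%E.
Proof. by apply: sume_ge0 => y _; rewrite mule_ge0 ?lee_fin ?invr_ge0. Qed.

Lemma fibered_measure_sigma_additive : semi_sigma_additive fibered_measure.
Proof.
move=> S mS tS mUS; rewrite [X in _ --> X](_ : _ = \sum_(k <oo) fibered_measure (S k))%E.
  by apply: is_cvg_ereal_nneg_natsum => k _; exact: fibered_measure_ge0.
rewrite nneseries_sum; last by move=> y k _; rewrite mule_ge0 ?lee_fin ?invr_ge0.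
apply: eq_bigr => y _; rewrite nneseriesZl //; congr (_ * _)%E.
rewrite [X in nu X](_ : _ = \bigcup_k fiber (S k) y); last first.
  by apply/seteqP; split=> t /= [k _ Skt]; exists k.
apply: measure_semi_bigcup => [k||]; first exact: mS.
  apply/trivIsetP => i j _ _ ij; apply/seteqP; split=> t // [Sit Sjt].
  by have : (S i `&` S j) (t, y) by []; rewrite (trivIsetP.1 tS i j I I ij).
by apply: bigcupT_measurable => k; exact: mS.
Qed.

HB.instance Definition _ := isMeasure.Build _ _ _ fibered_measure
  fibered_measure0 fibered_measure_ge0 fibered_measure_sigma_additive.

Lemma fibered_measureT : fibered_measure setT = 1%E.
Proof.
rewrite /fibered_measure (eq_bigr (fun _ => (#|F|%:R^-1)%:E)); last first.
  by move=> y _; rewrite [X in nu X](_ : _ = setT) ?probability_setT ?mule1.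
rewrite sumEFin sumr_const -[_ *+ _]mulr_natr cardE -cardT mulVf //.
by rewrite pnatr_eq0 -lt0n; apply/card_gt0P; exists 0.
Qed.

HB.instance Definition _ :=
  Measure_isProbability.Build _ _ _ fibered_measure fibered_measureT.

Lemma sum_mem_card (A : {set F}) : \sum_(y : F) ((y \in A)%:R : R) = #|A|%:R.
Proof.
rewrite -sum1_card natr_sum [RHS]big_mkcond.
by apply: eq_bigr => y _; case: (y \in A).
Qed.

Lemma fibered_measure_le (S : set X) (A : {set F}) (e : R) :
  (forall y, nu (fiber S y) <= ((y \in A)%:R * e)%:E)%E ->
  (fibered_measure S <= (#|A|%:R / #|F|%:R * e)%:E)%E.
Proof.
move=> S_le.
apply: (@le_trans _ _ (\sum_(y : F) ((#|F|%:R^-1)%:E * ((y \in A)%:R * e)%:E))%E).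
  by apply: lee_sum => y _; rewrite lee_wpmul2l ?lee_fin ?invr_ge0.
by rewrite sumEFin -mulr_sumr -mulr_suml sum_mem_card mulrCA mulrA.
Qed.

Lemma fibered_measure_cylinder (A : {set F}) :
  fibered_measure [set x | x.2 \in A] = (#|A|%:R / #|F|%:R)%:E.
Proof.
rewrite /fibered_measure (eq_bigr (fun y => (#|F|%:R^-1 * (y \in A)%:R)%:E)).
  by rewrite sumEFin -mulr_sumr sum_mem_card mulrC.
move=> y _; rewrite fiber_cylinder; case: (y \in A).
  by rewrite probability_setT mule1 mulr1.
by rewrite measure0 mulr0 mule0.
Qed.

End FiberedMeasure.

Section SkewProduct.
Variables (d : measure_display) (T : measurableType d) (F : finZmodType).
Variables (R : realType) (nu : probability T R) (G : zmodType) (c : G -> T -> F).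
Hypothesis cD : forall g h t, c (g + h) t = c g t + c h t.
Hypothesis measurable_c : forall g z, measurable [set t | c g t = z].
Local Notation X := (fibered T F).

Definition skew (g : G) (x : X) : X := (x.1, x.2 + c g x.1).

Lemma measurable_shifted_fiber (E : F -> set T) g y :
  (forall y, measurable (E y)) -> measurable [set t | E (y + c g t) t].
Proof.
move=> mE; rewrite [X in measurable X](_ : _ =
    \bigcup_(z in [set: F]) ([set t | c g t = z] `&` E (y + z))).
  apply: fin_bigcup_measurable => [|z _]; first exact: finite_finset.
  exact: measurableI (measurable_c _ _) (mE _).
by apply/seteqP; split=> t /=; [exists (c g t) | move=> [z _ [/= <-]]].
Qed.

Lemma sum_shifted_fiber (E : F -> set T) g : (forall y, measurable (E y)) ->
  (\sum_(y : F) nu [set t | E (y + c g t)%R t] = \sum_(y : F) nu (E y))%E.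
Proof.
move=> mE; have mindic (A : set T) : measurable A ->
    measurable_fun [set: T] (fun t => (\1_A t)%:E : \bar R).
  by move=> mA; exact/measurable_EFinP/measurable_indic.
have nu_indic (A : set T) : measurable A -> nu A = (\int[nu]_t (\1_A t)%:E)%E.
  by move=> mA; rewrite integral_indic // setIT.
rewrite (eq_bigr _ (fun y _ => nu_indic _ (measurable_shifted_fiber g y mE))).
rewrite [RHS](eq_bigr _ (fun y _ => nu_indic _ (mE y))).
rewrite -!ge0_integral_sum // => [|y|y]; last 2 first.
- exact/mindic.
- exact/mindic/measurable_shifted_fiber.
apply: eq_integral => t _; rewrite [RHS](reindex_inj (addIr (c g t))) /=.
by apply: eq_bigr => y _; rewrite !indicE.
Qed.

Lemma skew_mp_action : mp_action (fibered_measure nu) skew.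
Proof.
have c0 t : c 0 t = 0 by apply: (@addrI _ (c 0 t)); rewrite -cD !addr0.
split.
- move=> g _ S mS; change (fibered_measurable (setT `&` skew g @^-1` S)) => y.
  rewrite /fiber setTI.
  exact: (measurable_shifted_fiber (E := fiber S) _ _ mS).
- move=> g S mS; rewrite /= /fibered_measure -!ge0_sume_distrr //.
  by congr (_ * _)%E; exact: (sum_shifted_fiber (E := fiber S) _ mS).
- by apply/funext => -[t y]; rewrite /skew /= c0 addr0.
- by move=> g h; apply/funext => -[t y]; rewrite /skew /= cD addrA addrAC.
Qed.

Lemma skew_image g (S : set X) : skew g @` S = [set x | S (x.1, x.2 - c g x.1)].
Proof.
apply/seteqP; split=> [_ [[t y] Sty <-]|[t y] /= S']; first by rewrite /= addrK.
by exists (t, y - c g t); rewrite // /skew /= subrK.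
Qed.

End SkewProduct.

Section Characters.
Variables (R : realType) (p : nat) (p_pr : prime p).
Local Notation nu := (uniform_prob (@ltr01 R)).

(* the (k+1)-st base-p digit of r after the point *)
Definition digit (r : R) (k : nat) : nat := (Num.trunc ((p ^ k.+1)%:R * r) %% p)%N.

Lemma digitE r k D : (k <= D)%N ->
  digit r k = digitn p D (Num.trunc ((p ^ D.+1)%:R * r)) k.
Proof.
move=> kD; rewrite /digit /digitn -truncn_divn ?expn_gt0 ?prime_gt0 //.
have -> : (p ^ D.+1 = p ^ k.+1 * p ^ (D - k))%N.
  by rewrite -expnD; congr (_ ^ _)%N; lia.
by rewrite natrM mulrAC mulfK // pnatr_eq0 expn_eq0 (gtn_eqF (prime_gt0 p_pr)).
Qed.

Lemma digit_grid D t k : (k <= D)%N ->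
  digit (t%:R / (p ^ D.+1)%:R) k = digitn p D t k.
Proof.
move=> kD; rewrite (digitE _ kD) mulrC mulfVK ?natrK //.
by rewrite pnatr_eq0 expn_eq0 (gtn_eqF (prime_gt0 p_pr)).
Qed.

Definition digit_determined (T : Type) (K : nat) (phi : R -> T) : Prop :=
  forall r r', (forall k, (k < K)%N -> digit r k = digit r' k) -> phi r = phi r'.

Lemma measurable_digit_determined (T : Type) K (phi : R -> T) (Q : set T) :
  digit_determined K phi -> measurable [set r | Q (phi r)].
Proof.
move=> phiK; pose P := (p ^ K.+1)%N.
have phi_grid r : phi r = phi ((Num.trunc (P%:R * r))%:R / P%:R).
  by apply: phiK => k kK; rewrite (digitE _ (ltnW kK)) digit_grid // ltnW.
rewrite [X in measurable X](_ : _ =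
    [set r | (fun t => Q (phi (t%:R / P%:R))) (Num.trunc (P%:R * r))]).
  exact: (measurable_truncn_grid P%:R (fun t => Q (phi (t%:R / P%:R)))).
by apply/seteqP; split=> r /=; rewrite -phi_grid.
Qed.

Definition chi (r : R) (m : {poly 'F_p}) : 'F_p :=
  \sum_(k < size m) m`_k * (digit r k)%:R.

Lemma chiE r (m : {poly 'F_p}) K : (size m <= K)%N ->
  chi r m = \sum_(k < K) m`_k * (digit r k)%:R.
Proof.
move=> mK; rewrite /chi -(subnKC mK) big_split_ord /= [X in _ = _ + X]big1 ?addr0 //.
by move=> k _; rewrite nth_default ?mul0r // leq_addr.
Qed.

Lemma chiD r : {morph chi r : m1 m2 / m1 + m2}.
Proof.
move=> m1 m2; pose K := maxn (size m1) (size m2).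
rewrite !(@chiE r _ K) ?leq_maxl ?leq_maxr ?size_polyD // -big_split /=.
by apply: eq_bigr => k _; rewrite coefD mulrDl.
Qed.

Lemma chi_XnM r (n : {poly 'F_p}) j :
  chi r ('X^j * n) = \sum_(i < size n) n`_i * (digit r (i + j))%:R.
Proof.
rewrite (@chiE r _ (j + size n)); last first.
  by rewrite (leq_trans (size_polyMleq _ _)) // size_polyXn addSn.
rewrite big_split_ord /= big1 ?add0r => [|i _]; last by rewrite coefXnM ltn_ord mul0r.
by apply: eq_bigr => i _; rewrite coefXnM ltnNge leq_addr /= addKn addnC.
Qed.

Lemma chi_digit_determined (m : {poly 'F_p}) K :
  (size m <= K)%N -> digit_determined K (chi^~ m).
Proof.
move=> mK r r' eq_digits; rewrite !(chiE _ mK).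
by apply: eq_bigr => k _; rewrite eq_digits.
Qed.

Definition vanishing_set (n : {poly 'F_p}) (m : nat) : set R :=
  [set r | forall j, (j < m)%N -> chi r ('X^j * n) = 0].

Lemma vanishing_setE (n : {poly 'F_p}) m : n != 0 ->
  let D := ((size n).-1 + m)%N in
  vanishing_set n m.+1 =
    [set r | digit_recurrence n m.+1 D (Num.trunc ((p ^ D.+1)%:R * r))].
Proof.
move=> n_neq0 D; have sn := polySpred n_neq0.
have chi_grid (r : R) j : (j < m.+1)%N -> chi r ('X^j * n) =
    \sum_(i < size n) n`_i * (digitn p D (Num.trunc ((p ^ D.+1)%:R * r)) (i + j))%:R.
  move=> jm; rewrite chi_XnM; apply: eq_bigr => i _; rewrite (@digitE _ _ D) //.
  by have := ltn_ord i; rewrite {2}sn /D; lia.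
apply/seteqP; split=> r /=.
  by move=> van; apply/forallP => j; rewrite -chi_grid // van.
by move=> /forallP rec j jm; rewrite chi_grid //; apply/eqP/(rec (Ordinal jm)).
Qed.

Lemma measurable_vanishing_set (n : {poly 'F_p}) m : n != 0 ->
  measurable (vanishing_set n m.+1).
Proof.
move=> n_neq0; rewrite vanishing_setE //.
exact: (measurable_truncn_grid _ (digit_recurrence n m.+1 _)).
Qed.

(* The exact value is p^-(m+2); the crude bound suffices. *)
Lemma uniform_vanishing_set_le (n : {poly 'F_p}) m : n != 0 ->
  (nu (vanishing_set n m.+2) <= ((p ^ m)%:R^-1)%:E)%E.
Proof.
move=> n_neq0; rewrite vanishing_setE //.
set d := (size n).-1; set P := (p ^ (d + m.+1).+1)%N.
have p_gt0 := prime_gt0 p_pr.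
have P_gt0 : (0 < P)%N by rewrite expn_gt0 p_gt0.
apply: le_trans (uniform_truncn_grid_le _ _ P_gt0) _.
rewrite lee_fin ler_pdivrMr ?ltr0n // mulrC ler_pdivlMr ?ltr0n ?expn_gt0 ?p_gt0 //.
rewrite -natrM ler_nat.
apply: (leq_trans (leq_mul (card_digit_recurrence p_pr n_neq0 m.+1) (leqnn (p ^ m)))).
have -> : P = (p ^ d * p ^ 2 * p ^ m)%N by rewrite /P -!expnD; congr (_ ^ _)%N; lia.
rewrite leq_pmul2r ?expn_gt0 ?p_gt0 //.
have : (1 <= p ^ d)%N by rewrite expn_gt0 p_gt0.
have : (4 <= p ^ 2)%N by rewrite -[4%N]/(2 ^ 2)%N leq_exp2r ?prime_gt1.
by move: (p ^ d)%N (p ^ 2)%N => a b; nia.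
Qed.

End Characters.

Section CornerFree.
Variables (R : realType) (p N : nat).
Local Notation F := 'rV['F_p]_(1 + N).

(* Entries are stored in decreasing powers of t, so that multiplying n by t
   shifts the row to the right. *)
Definition chi_row (r : R) (n : {poly 'F_p}) : F :=
  \row_(i < 1 + N) chi r ('X^(N - i) * n).

Lemma chi_rowD r : {morph chi_row r : g h / g + h}.
Proof. by move=> g h; apply/rowP => i; rewrite !mxE mulrDr chiD. Qed.

Lemma chi_row_digit_determined (n : {poly 'F_p}) K : (size n + N <= K)%N ->
  digit_determined p K (chi_row^~ n).
Proof.
move=> nK r r' eq_digits; apply/rowP => i; rewrite !mxE.
apply: (chi_digit_determined _ eq_digits); apply: leq_trans nK.
by rewrite (leq_trans (size_polyMleq _ _)) // size_polyXn addSn addnC leq_add2l; lia.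
Qed.

Definition prefix0 (B : {set 'rV['F_p]_N}) : {set F} := [set row_mx 0 b | b in B]%SET.

Lemma mem_prefix0 B y : (y \in prefix0 B) = (lsubmx y == 0) && (rsubmx y \in B).
Proof.
apply/imsetP/andP => [[b Bb ->]|[/eqP y0 By]]; first by rewrite row_mxKl row_mxKr.
by exists (rsubmx y); rewrite // -y0 hsubmxK.
Qed.

Lemma card_prefix0 B : #|prefix0 B| = #|B|.
Proof. by apply: card_imset => b b' /eq_row_mx[]. Qed.

Lemma rsubmx_chi_rowXM r n : lsubmx (chi_row r n) = 0 ->
  rsubmx (chi_row r ('X * n)) = shiftr (rsubmx (chi_row r n)).
Proof.
move=> /rowP /(_ ord0); rewrite !mxE /= subn0 => chi_XN.
apply/rowP => k; rewrite !mxE mulrA -exprSr.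
case: k => -[|k] kN /=; first by rewrite addn0 subn1 prednK.
rewrite !mxE /= insubdK; last exact: ltnW.
by congr (chi r ('X^_ * n)); lia.
Qed.

Lemma corner_free_vanishing (B : {set 'rV['F_p]_N}) r n y : corner_free B ->
  y \in prefix0 B -> y - chi_row r n \in prefix0 B ->
  y - chi_row r ('X * n) \in prefix0 B -> vanishing_set n N.+2 r.
Proof.
move=> cfB; rewrite !mem_prefix0 !linearB /= => /andP[/eqP -> By].
rewrite !sub0r !oppr_eq0 => /andP[/eqP a0 Ba] /andP[/eqP aX0 BaX].
rewrite rsubmx_chi_rowXM // in BaX.
have u0 : rsubmx (chi_row r n) = 0.
  apply/eqP; rewrite -oppr_eq0; apply/negPn/negP => u_neq0.
  by apply: (cfB (rsubmx y) _ u_neq0); split; rewrite // shiftrN.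
have a_eq0 : chi_row r n = 0 by rewrite -[chi_row r n]hsubmxK a0 u0 row_mx0.
have a0_entry (i : 'I_(1 + N)) : chi r ('X^(N - i) * n) = 0.
  by move/rowP: a_eq0 => /(_ i); rewrite !mxE.
move=> j; rewrite ltnS leq_eqVlt => /orP[/eqP ->|jN].
  by move/rowP: aX0 => /(_ ord0); rewrite !mxE /= mulrA -exprSr subn0.
by have := a0_entry (Ordinal (leq_subr j N : N - j < 1 + N)%N); rewrite /= subKn.
Qed.

End CornerFree.

Section CornerFreeSystem.
Variables (R : realType) (p N : nat) (p_pr : prime p).
Variables (B : {set 'rV['F_p]_N}) (B_corner_free : corner_free B).
Local Notation F := 'rV['F_p]_(1 + N).
Local Notation X := (fibered R F).
Local Notation mu := (fibered_measure (uniform_prob (@ltr01 R))).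
Local Notation T := (skew (fun n r => @chi_row R p N r n)).

Definition corner_set : set X := [set x | x.2 \in prefix0 B].

Lemma chi_row_mp_action : mp_action mu T.
Proof.
apply: skew_mp_action => [g h r|g z]; first exact: chi_rowD.
exact: (measurable_digit_determined p_pr (eq^~ z)
  (chi_row_digit_determined (leqnn (size g + N)))).
Qed.

Lemma corner_set_measure : mu corner_set = (#|B|%:R / (p ^ (1 + N))%:R)%:E.
Proof. by rewrite fibered_measure_cylinder card_prefix0 card_mx card_Fp // mul1n. Qed.

Lemma corner_set_triple_le n : n != 0 ->
  (mu (corner_set `&` T n @` corner_set `&` T ('X * n) @` corner_set) <=
     (#|B|%:R / (p ^ (1 + N))%:R * (p ^ N)%:R^-1)%:E)%E.
Proof.
move=> n_neq0; pose e := (p ^ N)%:R^-1 : R.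
apply: le_trans (fibered_measure_le (A := prefix0 B) (e := e) _) _; last first.
  by rewrite card_prefix0 card_mx card_Fp // mul1n.
move=> y; rewrite !skew_image /fiber /corner_set /=.
case: (boolP (y \in prefix0 B)) => [yB|yNB]; last first.
  rewrite mul0r [X in uniform_prob _ X](_ : _ = set0) ?measure0 //.
  by apply/seteqP; split=> r // [[]].
rewrite mul1r; apply: le_trans (uniform_vanishing_set_le R p_pr N n_neq0).
apply: le_measure; rewrite ?inE; last 2 first.
- exact: measurable_vanishing_set.
- by move=> r [[_ yaB] yaXB]; exact: (corner_free_vanishing B_corner_free yB yaB yaXB).
pose phi (r : R) := (chi_row N r n, chi_row N r ('X * n)).
have phi_determined : digit_determined p (size n + N).+1 phi.
  move=> r r' eq_digits; congr (_, _); apply: chi_row_digit_determined eq_digits.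
    exact: leqW.
  by rewrite mulrC size_mulX // addSn.
exact: (measurable_digit_determined p_pr
  (fun a => (true /\ y - a.1 \in prefix0 B) /\ y - a.2 \in prefix0 B) phi_determined).
Qed.

End CornerFreeSystem.

Theorem proposition11p9 (R : realType) (p N : nat) (B : {set 'rV['F_p]_N}) :
  prime p ->
  (p%:R `^ (N%:R / 2 + 1) < (#|B|%:R : R)) ->
  corner_free B ->
  exists (d : measure_display) (X : measurableType d) (mu : probability X R)
         (T : {poly 'F_p} -> X -> X) (A : set X),
    [/\ mp_action mu T, measurable A, (0 < mu A)%E
      & forall n : {poly 'F_p}, n != 0 ->
          (mu (A `&` (T n @` A) `&` (T ('X * n)%R @` A))
             <= ((p%:R `^ (N%:R / 2 + 1) / (#|B|%:R : R)) ^+ 2)%:E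
                * (mu A * mu A * mu A))%E
          /\ (((p%:R `^ (N%:R / 2 + 1) / (#|B|%:R : R)) ^+ 2)%:E
                * (mu A * mu A * mu A) < mu A * mu A * mu A)%E].
Proof.
move=> p_pr B_large B_corner_free.
have p_gt0 : 0 < p%:R :> R by rewrite ltr0n prime_gt0.
have B_gt0 : 0 < #|B|%:R :> R by apply: le_lt_trans B_large; exact: powR_ge0.
have A_gt0 : 0 < #|B|%:R / (p ^ (1 + N))%:R :> R.
  by rewrite divr_gt0 // ltr0n expn_gt0 prime_gt0.
set c := p%:R `^ (N%:R / 2 + 1) / #|B|%:R.
have c2 : c ^+ 2 = p%:R ^+ (N + 2) / #|B|%:R ^+ 2.
  by rewrite expr_div_n powR_half_sqr // ltW.
have c_lt1 : c < 1 by rewrite ltr_pdivrMr // mul1r.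
exists _, _, (fibered_measure (uniform_prob (@ltr01 R))),
  (skew (fun n r => chi_row N r n)), (@corner_set R p N B).
rewrite [Probability.sort _]/= (corner_set_measure R p_pr); split.
- exact: chi_row_mp_action.
- exact: measurable_cylinder.
- by rewrite (lte_fin 0).
move=> n n_neq0; rewrite -!EFinM; split.
  apply: le_trans (corner_set_triple_le R p_pr B_corner_free n_neq0) _.
  rewrite lee_fin c2 !natrX !exprD expr1 le_eqVlt; apply/orP; left; apply/eqP.
  have pN_neq0 : p%:R ^+ N != 0 :> R by rewrite expf_neq0 ?gt_eqF.
  by field; rewrite pN_neq0 !gt_eqF.
rewrite lte_fin gtr_pMl; last by do 2 apply: mulr_gt0 => //.
by rewrite expr_lt1 // divr_ge0 ?powR_ge0 // ltW.
Qed.
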